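(* For $0\le v\le 1$ and $a,b>0$, $$G(a,b)\le L\left(G_v(a,b),G_{1-v}(a,b)\right)\le L(a,b)$$ and $$G(a,b)\le G\left(L_v(a,b),L_{1-v}(a,b)\right)\le L(a,b).$$
   Context: For $x,y>0$: $G(x,y):=\sqrt{xy}$, $G_v(x,y):=x^{1-v}y^v$, and the logarithmic mean $L(x,y):=\frac{x-y}{\log x-\log y}$ for $x\neq y$, $L(x,x):=x$. For $0<v<1$ and $a\ne b$ the weighted logarithmic mean is $$L_v(a,b):=\frac{1}{\log a-\log b}\left(\frac{1-v}{v}(a-a^{1-v}b^v)+\frac{v}{1-v}(a^{1-v}b^v-b)\right),$$ with $L_v(a,a):=a$, and for the endpoint values (by continuity in $v$) $L_0(a,b):=a$, $L_1(a,b):=b$. *)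

From Stdlib Require Import Reals.
Open Scope R_scope.

Definition Gm (x y : R) : R := sqrt (x * y).

Definition Gv (v x y : R) : R := Rpower x (1 - v) * Rpower y v.

Definition Lm (x y : R) : R :=
  if Req_EM_T x y then x else (x - y) / (ln x - ln y).

Definition Lv (v a b : R) : R :=
  if Req_EM_T a b then a
  else if Req_EM_T v 0 then a
  else if Req_EM_T v 1 then b
  else / (ln a - ln b) *
       ((1 - v) / v * (a - Gv v a b) + v / (1 - v) * (Gv v a b - b)).

(* Write a = e^(m+d) and b = e^(m-d). Then G(a,b) = e^m, L(a,b) = e^m sinhc d with
   sinhc t = sinh t / t, and G_v(a,b), G_(1-v)(a,b) = e^(m +- (1-2v)d). The function
   sinhc is even, at least 1, and increasing in |t| because sinh is convex on [0, +oo)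
   with sinh 0 = 0; this gives the first chain at once.
   For the second, L_v(a,b) L_(1-v)(a,b) = e^(2m) Q where, with A = sinhc(vd) and
   B = sinhc((1-v)d), Q = (1-v)^2 A^2 + v^2 B^2 + 2v(1-v) A B cosh d. Since A, B and
   cosh d are at least 1, Q >= ((1-v)A + vB)^2 >= 1. Expanding sinh d = sinh(vd + (1-v)d)
   gives sinhc(d)^2 = Q + (2v-1)(A^2 - B^2), and the last term is nonnegative because
   the larger of A, B belongs to the larger of v, 1-v. *)

From Stdlib Require Import Reals Lra.
From Coquelicot Require Import Coquelicot.
Open Scope R_scope.

Lemma increasing_of_is_derive_nonneg (f f' : R -> R) :
  (forall x, is_derive f x (f' x)) -> (forall x, 0 <= f' x) -> increasing f.
Proof.
  intros Hd Hpos.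
  apply (nonneg_derivative_1 f (fun x => exist _ (f' x) (proj1 (is_derive_Reals _ _ _) (Hd x)))).
  exact Hpos.
Qed.

Lemma cosh_Rabs x : cosh (Rabs x) = cosh x.
Proof.
  unfold Rabs; destruct (Rcase_abs x); [|reflexivity].
  unfold cosh; rewrite Ropp_involutive; lra.
Qed.

Lemma cosh_le_abs s t : Rabs s <= Rabs t -> cosh s <= cosh t.
Proof.
  rewrite <- (cosh_Rabs s), <- (cosh_Rabs t).
  generalize (Rabs_pos s); generalize (Rabs s) (Rabs t); clear s t; intros s t Hs Hst.
  assert (Hdiff : cosh t - cosh s = (exp t - exp s) * (1 - / (exp s * exp t)) / 2).
  { unfold cosh; rewrite !exp_Ropp; field; split; apply Rgt_not_eq, exp_pos. }
  assert (exp s <= exp t).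
  { destruct (Rle_lt_or_eq_dec s t Hst) as [Hlt | ->]; [left; apply exp_increasing|]; lra. }
  assert (1 <= exp s * exp t).
  { rewrite <- exp_plus; generalize (exp_ineq1_le (s + t)); lra. }
  assert (/ (exp s * exp t) <= 1).
  { rewrite <- Rinv_1; apply Rinv_le_contravar; lra. }
  nra.
Qed.

Lemma one_le_cosh x : 1 <= cosh x.
Proof. rewrite <- cosh_0; apply cosh_le_abs; rewrite Rabs_R0; apply Rabs_pos. Qed.

Lemma id_le_sinh x : 0 <= x -> x <= sinh x.
Proof.
  intros Hx.
  assert (Hincr : increasing (fun y => sinh y - y)).
  { apply (increasing_of_is_derive_nonneg _ (fun y => cosh y - 1)).
    - intros y; unfold sinh, cosh; auto_derive; [exact I | field].
    - intros y; generalize (one_le_cosh y); lra. }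
  generalize (Hincr 0 x Hx); rewrite sinh_0; lra.
Qed.

Lemma sinh_scal_le l x : 0 <= l <= 1 -> 0 <= x -> sinh (l * x) <= l * sinh x.
Proof.
  intros Hl Hx.
  assert (Hincr : increasing (fun y => l * sinh y - sinh (l * y))).
  { apply (increasing_of_is_derive_nonneg _ (fun y => l * (cosh y - cosh (l * y)))).
    - intros y; unfold sinh, cosh; auto_derive; [exact I | field].
    - intros y; apply Rmult_le_pos; [lra|].
      enough (cosh (l * y) <= cosh y) by lra.
      apply cosh_le_abs; rewrite Rabs_mult, (Rabs_right l) by lra.
      generalize (Rabs_pos y); nra. }
  generalize (Hincr 0 x Hx); rewrite Rmult_0_r, sinh_0; lra.
Qed.

Definition sinhc (t : R) : R := if Req_EM_T t 0 then 1 else sinh t / t.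

Lemma sinhc_Rabs t : sinhc (Rabs t) = sinhc t.
Proof.
  unfold Rabs; destruct (Rcase_abs t); [|reflexivity].
  unfold sinhc; destruct (Req_EM_T (- t) 0), (Req_EM_T t 0); try lra.
  unfold sinh; rewrite Ropp_involutive; field; assumption.
Qed.

Lemma sinhc_pos_le s t : 0 < s <= t -> sinhc s <= sinhc t.
Proof.
  intros Hst; unfold sinhc.
  destruct (Req_EM_T s 0) as [|Hs], (Req_EM_T t 0) as [|Ht]; try lra.
  assert (Hconv : sinh s <= s / t * sinh t).
  { set (l := s / t).
    assert (Hl : s = l * t) by (unfold l; field; exact Ht).
    rewrite Hl at 1; apply sinh_scal_le; nra. }
  assert (Hdiff : sinh t / t - sinh s / s = (s / t * sinh t - sinh s) / s) by (field; auto).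
  assert (0 <= (s / t * sinh t - sinh s) / s) by (apply Rdiv_le_0_compat; lra).
  lra.
Qed.

Lemma one_le_sinhc t : 1 <= sinhc t.
Proof.
  rewrite <- sinhc_Rabs; unfold sinhc.
  destruct (Req_EM_T (Rabs t) 0) as [|Ht]; [lra|].
  assert (Hpos : 0 < Rabs t) by (generalize (Rabs_pos t); lra).
  generalize (id_le_sinh (Rabs t) (Rabs_pos t)); intros Hle.
  unfold Rdiv; rewrite <- (Rinv_r (Rabs t)) by lra.
  apply Rmult_le_compat_r; [left; apply Rinv_0_lt_compat|]; lra.
Qed.

Lemma sinhc_le_abs s t : Rabs s <= Rabs t -> sinhc s <= sinhc t.
Proof.
  intros Hst; rewrite <- (sinhc_Rabs s), <- (sinhc_Rabs t).
  destruct (Req_dec (Rabs s) 0) as [Hs|Hs].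
  - rewrite Hs; unfold sinhc at 1; destruct (Req_EM_T 0 0); [apply one_le_sinhc | lra].
  - apply sinhc_pos_le; generalize (Rabs_pos s); lra.
Qed.

Lemma sinhc_sq_le_abs s t : Rabs s <= Rabs t -> sinhc s ^ 2 <= sinhc t ^ 2.
Proof.
  intros Hst; generalize (sinhc_le_abs s t Hst) (one_le_sinhc s); intros; nra.
Qed.

Lemma exp_center_form a b : 0 < a -> 0 < b ->
  exists m d, a = exp (m + d) /\ b = exp (m - d).
Proof.
  intros Ha Hb; exists ((ln a + ln b) / 2), ((ln a - ln b) / 2); split.
  - rewrite <- (exp_ln a) at 1 by exact Ha; f_equal; field.
  - rewrite <- (exp_ln b) at 1 by exact Hb; f_equal; field.
Qed.

Lemma Gm_exp m d : Gm (exp (m + d)) (exp (m - d)) = exp m.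
Proof.
  unfold Gm; rewrite <- exp_plus, <- sqrt_square by (left; apply exp_pos).
  rewrite <- exp_plus; f_equal; f_equal; field.
Qed.

Lemma Lm_exp m d : Lm (exp (m + d)) (exp (m - d)) = exp m * sinhc d.
Proof.
  unfold Lm, sinhc.
  destruct (Req_EM_T (exp (m + d)) (exp (m - d))) as [He|He], (Req_EM_T d 0) as [Hd|Hd].
  - rewrite Hd, Rplus_0_r; ring.
  - apply exp_inv in He; lra.
  - rewrite Hd, Rplus_0_r, Rminus_0_r in He; contradiction.
  - rewrite !ln_exp; unfold sinh, Rminus; rewrite !exp_plus; field; split; [exact Hd | lra].
Qed.

Lemma Gv_exp v m d : Gv v (exp (m + d)) (exp (m - d)) = exp (m + (1 - 2 * v) * d).
Proof. unfold Gv, Rpower; rewrite !ln_exp, <- exp_plus; f_equal; ring. Qed.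

Lemma Gm_le_Lm a b : 0 < a -> 0 < b -> Gm a b <= Lm a b.
Proof.
  intros Ha Hb; destruct (exp_center_form a b Ha Hb) as (m & d & -> & ->).
  rewrite Gm_exp, Lm_exp; generalize (exp_pos m) (one_le_sinhc d); nra.
Qed.

Lemma Gm_le_Lm_Gv_le_Lm v a b : 0 <= v <= 1 -> 0 < a -> 0 < b ->
  Gm a b <= Lm (Gv v a b) (Gv (1 - v) a b) <= Lm a b.
Proof.
  intros Hv Ha Hb; destruct (exp_center_form a b Ha Hb) as (m & d & -> & ->).
  rewrite !Gv_exp.
  replace (m + (1 - 2 * (1 - v)) * d) with (m - (1 - 2 * v) * d) by ring.
  rewrite Gm_exp, !Lm_exp.
  assert (Habs : Rabs ((1 - 2 * v) * d) <= Rabs d).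
  { rewrite Rabs_mult; generalize (Rabs_pos d); assert (Rabs (1 - 2 * v) <= 1) by (apply Rabs_le; lra).
    nra. }
  generalize (exp_pos m) (one_le_sinhc ((1 - 2 * v) * d)) (sinhc_le_abs _ _ Habs); split; nra.
Qed.

Lemma exp_split v d : exp d = exp (v * d) * exp ((1 - v) * d).
Proof. rewrite <- exp_plus; f_equal; ring. Qed.

Lemma Lv_0 a b : Lv 0 a b = a.
Proof. unfold Lv; destruct (Req_EM_T a b), (Req_EM_T 0 0); lra. Qed.

Lemma Lv_1 a b : Lv 1 a b = b.
Proof. unfold Lv; destruct (Req_EM_T a b), (Req_EM_T 1 0), (Req_EM_T 1 1); lra. Qed.

Lemma Lv_same v a : Lv v a a = a.
Proof. unfold Lv; destruct (Req_EM_T a a); [reflexivity | contradiction]. Qed.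

Lemma Lv_exp v m d : 0 < v < 1 -> d <> 0 ->
  Lv v (exp (m + d)) (exp (m - d)) =
  exp m * ((1 - v) * exp ((1 - v) * d) * sinhc (v * d)
           + v * exp (- (v * d)) * sinhc ((1 - v) * d)).
Proof.
  intros Hv Hd; unfold Lv.
  destruct (Req_EM_T (exp (m + d)) (exp (m - d))) as [He|_].
  { apply exp_inv in He; lra. }
  destruct (Req_EM_T v 0), (Req_EM_T v 1); try lra.
  assert (Hvd : v * d <> 0) by (apply Rmult_integral_contrapositive; split; lra).
  assert (Hwd : (1 - v) * d <> 0) by (apply Rmult_integral_contrapositive; split; lra).
  unfold sinhc; destruct (Req_EM_T (v * d) 0), (Req_EM_T ((1 - v) * d) 0); try contradiction.
  rewrite !ln_exp, Gv_exp.
  replace (m + (1 - 2 * v) * d) with (m + ((1 - v) * d + - (v * d))) by ring.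
  replace (m - d) with (m + - d) by ring.
  unfold sinh; rewrite !exp_plus, !exp_Ropp, (exp_split v d).
  field; repeat split; try lra; apply Rgt_not_eq, exp_pos.
Qed.

Definition Lv_pair_factor (v d : R) : R :=
  (1 - v) ^ 2 * sinhc (v * d) ^ 2 + v ^ 2 * sinhc ((1 - v) * d) ^ 2
  + 2 * v * (1 - v) * sinhc (v * d) * sinhc ((1 - v) * d) * cosh d.

Lemma Lv_mul_Lv_exp v m d : 0 < v < 1 -> d <> 0 ->
  Lv v (exp (m + d)) (exp (m - d)) * Lv (1 - v) (exp (m + d)) (exp (m - d)) =
  exp m ^ 2 * Lv_pair_factor v d.
Proof.
  intros Hv Hd.
  rewrite (Lv_exp v) by lra; rewrite (Lv_exp (1 - v)) by lra.
  replace (1 - (1 - v)) with v by ring.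
  unfold Lv_pair_factor, cosh; rewrite !exp_Ropp, (exp_split v d).
  field; split; apply Rgt_not_eq, exp_pos.
Qed.

Lemma sinhc_sq_split v d : 0 < v < 1 -> d <> 0 ->
  sinhc d ^ 2 = Lv_pair_factor v d
                + (2 * v - 1) * (sinhc (v * d) ^ 2 - sinhc ((1 - v) * d) ^ 2).
Proof.
  intros Hv Hd.
  assert (Hvd : v * d <> 0) by (apply Rmult_integral_contrapositive; split; lra).
  assert (Hwd : (1 - v) * d <> 0) by (apply Rmult_integral_contrapositive; split; lra).
  unfold Lv_pair_factor, sinhc.
  destruct (Req_EM_T d 0), (Req_EM_T (v * d) 0), (Req_EM_T ((1 - v) * d) 0); try contradiction.
  unfold sinh, cosh; rewrite !exp_Ropp, (exp_split v d).
  field; repeat split; try lra; apply Rgt_not_eq, exp_pos.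
Qed.

Lemma one_le_Lv_pair_factor v d : 0 <= v <= 1 -> 1 <= Lv_pair_factor v d.
Proof.
  intros Hv; unfold Lv_pair_factor.
  set (A := sinhc (v * d)); set (B := sinhc ((1 - v) * d)).
  assert (HA : 1 <= A) by apply one_le_sinhc.
  assert (HB : 1 <= B) by apply one_le_sinhc.
  assert (Hmix : 1 <= (1 - v) * A + v * B) by nra.
  assert (Hcross : 0 <= 2 * v * (1 - v) * A * B * (cosh d - 1)).
  { generalize (one_le_cosh d); intros; apply Rmult_le_pos; [|lra].
    repeat apply Rmult_le_pos; lra. }
  nra.
Qed.

Lemma Lv_pair_factor_le v d : 0 < v < 1 -> d <> 0 -> Lv_pair_factor v d <= sinhc d ^ 2.
Proof.
  intros Hv Hd; rewrite (sinhc_sq_split v d Hv Hd).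
  assert (Hvd : Rabs (v * d) = v * Rabs d) by (rewrite Rabs_mult, Rabs_right; lra).
  assert (Hwd : Rabs ((1 - v) * d) = (1 - v) * Rabs d) by (rewrite Rabs_mult, Rabs_right; lra).
  generalize (Rabs_pos d); intros Habs.
  destruct (Rle_dec v (1 / 2)).
  - assert (sinhc (v * d) ^ 2 <= sinhc ((1 - v) * d) ^ 2)
      by (apply sinhc_sq_le_abs; rewrite Hvd, Hwd; nra).
    nra.
  - assert (sinhc ((1 - v) * d) ^ 2 <= sinhc (v * d) ^ 2)
      by (apply sinhc_sq_le_abs; rewrite Hvd, Hwd; nra).
    nra.
Qed.

Lemma Gm_le_Gm_Lv_le_Lm v a b : 0 <= v <= 1 -> 0 < a -> 0 < b ->
  Gm a b <= Gm (Lv v a b) (Lv (1 - v) a b) <= Lm a b.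
Proof.
  intros Hv Ha Hb.
  generalize (Gm_le_Lm a b Ha Hb); intros HGL.
  destruct (Req_dec v 0) as [->|Hv0].
  { rewrite Rminus_0_r, Lv_0, Lv_1; lra. }
  destruct (Req_dec v 1) as [->|Hv1].
  { rewrite Rminus_diag, Lv_0, Lv_1.
    replace (Gm b a) with (Gm a b) by (unfold Gm; rewrite Rmult_comm; reflexivity); lra. }
  destruct (Req_dec a b) as [<-|Hab].
  { rewrite !Lv_same; lra. }
  destruct (exp_center_form a b Ha Hb) as (m & d & -> & ->).
  assert (Hd : d <> 0) by (intros ->; apply Hab; f_equal; ring).
  rewrite Gm_exp, Lm_exp; unfold Gm.
  rewrite Lv_mul_Lv_exp, sqrt_mult_alt, sqrt_pow2 by (lra || apply pow2_ge_0 || (left; apply exp_pos)).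
  assert (Hlow : 1 <= sqrt (Lv_pair_factor v d)).
  { rewrite <- sqrt_1; apply sqrt_le_1_alt, one_le_Lv_pair_factor; lra. }
  assert (Hup : sqrt (Lv_pair_factor v d) <= sinhc d).
  { rewrite <- (sqrt_pow2 (sinhc d)) by (generalize (one_le_sinhc d); lra).
    apply sqrt_le_1_alt, Lv_pair_factor_le; lra. }
  generalize (exp_pos m); split; nra.
Qed.

Theorem theorem2p11 (v a b : R) :
  0 <= v <= 1 -> 0 < a -> 0 < b ->
  (Gm a b <= Lm (Gv v a b) (Gv (1 - v) a b) <= Lm a b) /\
  (Gm a b <= Gm (Lv v a b) (Lv (1 - v) a b) <= Lm a b).
Proof.
  intros Hv Ha Hb; split.
  - exact (Gm_le_Lm_Gv_le_Lm v a b Hv Ha Hb).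
  - exact (Gm_le_Gm_Lv_le_Lm v a b Hv Ha Hb).
Qed.
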